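(* Under the Standing Assumptions, let $g:X\to X$ be a homeomorphism commuting with $f$ and let $\Gamma:\mathcal E\to\mathcal E$ be a continuous linear extension of $g$ (fiber isomorphisms $\Gamma_x:\mathcal E_x\to\mathcal E_{gx}$ depending continuously on $x$) commuting with $F$, i.e. $\Gamma_{fx}\circ F_x=F_{gx}\circ\Gamma_x$ for all $x$. Then $\Gamma_x(\mathcal E^i_x)=\mathcal E^i_{gx}$ for all $x\in X$ and $i=1,\dots,\ell$; in particular $\Gamma_x\in\mathcal R_{x,gx}$. (This applies to $\Gamma_x=D_0\mathcal G_x$ for a $C^1$ extension $\mathcal G$ of $g$ preserving the zero section and commuting with $\mathcal F$.)
   Context: Standing Assumptions: $X$ is a compact metric space, $f:X\to X$ a homeomorphism, $\mathcal E$ a continuous finite-dimensional real vector bundle over $X$ with a continuous family of inner-product norms. $F:\mathcal E\to\mathcal E$ is a continuous linear extension of $f$ with fiber isomorphisms $F_x:\mathcal E_x\to\mathcal E_{fx}$; $\chi=(\chi_1,\dots,\chi_\ell)$ with $\chi_1<\dots<\chi_\ell<0$ and $0<\varepsilon<\varepsilon_0(\chi)$; there is a continuous $F$-invariant splitting $\mathcal E=\mathcal E^1\oplus\dots\oplus\mathcal E^\ell$ with $e^{\chi_i-\varepsilon}\|t\|\le\|F_xt\|\le e^{\chi_i+\varepsilon}\|t\|$ for $t\in\mathcal E^i_x$ (after choosing a suitable continuous metric; this holds whenever $F$ has $(\chi,\varepsilon)$-spectrum, i.e. $\{\lambda: e^\lambda\in\mathrm{Sp}(F^*_{\mathbb C})\}\subset\bigcup_i(\chi_i-\varepsilon,\chi_i+\varepsilon)$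 where $F^*v(x)=F(v(f^{-1}x))$ on continuous sections). $\mathcal R_{x,y}$ denotes resonance polynomial maps $\mathcal E_x\to\mathcal E_y$ fixing $0$ with invertible derivative; a linear map is in $\mathcal R_{x,y}$ iff it maps $\mathcal E^i_x$ into $\mathcal E^i_y$ for all $i$. Constants: $d=\lfloor\chi_1/\chi_\ell\rfloor$; $\tilde\lambda=\max\{-\chi_i+\sum_js_j\chi_j<0\}$, $\mu=\max\{\chi_i-\sum_js_j\chi_j<0\}$ (over $i$ and non-negative integers $s_j$ making the expression negative); $\lambda=\max\{\tilde\lambda,-\chi_1+(d+1)\chi_\ell\}$; $\varepsilon_0(\chi)=\min\{-\chi_\ell,-\lambda/(d+2),-\mu/(d+1)\}$. *)

From HB Require Import structures.
From mathcomp Require Import all_boot all_order all_algebra.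
From mathcomp Require Import all_classical all_reals all_analysis.
Set Implicit Arguments. Unset Strict Implicit. Unset Printing Implicit Defensive.
Import Order.TTheory GRing.Theory Num.Theory.
Import numFieldNormedType.Exports.
Local Open Scope classical_set_scope.
Local Open Scope ring_scope.

(* The bundle E is realised as a continuous subbundle of the trivial bundle
   X x R^N: fibre E_x = row space of an orthogonal projection matrix P x
   depending continuously on x.  Vectors are row vectors 'rV_N, linear maps
   act on the right (t |-> t *m A). *)

Definition is_orth_proj (R : realType) (N : nat) (P : 'M[R]_N) : Prop :=
  P *m P = P /\ P^T = P.

Definition cont_subbundle (R : realType) (X : topologicalType) (N : nat)
  (P : X -> 'M[R]_N) : Prop :=
  continuous P /\ forall x, is_orth_proj (P x).

(* continuous linear extension of h : X -> X on the subbundle P, given by a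
   continuous matrix field A: the fibre map E_x -> E_{h x} is t |-> t *m A x,
   and it is a linear isomorphism E_x -> E_{h x}. *)
Definition lin_extension (R : realType) (X : topologicalType) (N : nat)
  (P : X -> 'M[R]_N) (h : X -> X) (A : X -> 'M[R]_N) : Prop :=
  continuous A /\
  forall x, (P x *m A x == P (h x))%MS /\ \rank (P x) = \rank (P (h x)).

Definition homeomorphism (X : topologicalType) (h : X -> X) : Prop :=
  exists hinv : X -> X,
    [/\ continuous h, continuous hinv, cancel h hinv & cancel hinv h].

Definition fib_norm (R : realType) (N : nat) (G : 'M[R]_N) (t : 'rV[R]_N) : R :=
  Num.sqrt ((t *m G *m t^T) 0 0).

Definition cont_inner (R : realType) (X : topologicalType) (N : nat)
  (G : X -> 'M[R]_N) : Prop :=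
  continuous G /\
  forall x, (G x)^T = G x /\
    forall t : 'rV[R]_N, t != 0 -> 0 < (t *m G x *m t^T) 0 0.

(* Constants attached to chi = (chi_1 < ... < chi_l), indexed by 'I_l.+1 *)
Section Consts.
Variables (R : realType) (l : nat) (chi : 'I_l.+1 -> R).

Definition chi1 := chi ord0.
Definition chil := chi ord_max.

Definition dconst : R := (Num.floor (chi1 / chil))%:~R.

Definition combo (s : 'I_l.+1 -> nat) : R := \sum_j (s j)%:R * chi j.

(* tilde lambda = max { -chi_i + sum_j s_j chi_j < 0 } (max exists, = sup) *)
Definition lambda_tilde : R :=
  sup [set r : R | exists i (s : 'I_l.+1 -> nat),
         r = - chi i + combo s /\ r < 0].

Definition mu_const : R :=
  sup [set r : R | exists i (s : 'I_l.+1 -> nat),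
         r = chi i - combo s /\ r < 0].

Definition lambda_const : R :=
  Num.max lambda_tilde (- chi1 + (dconst + 1) * chil).

Definition eps0 : R :=
  Num.min (- chil)
    (Num.min (- lambda_const / (dconst + 2)) (- mu_const / (dconst + 1))).
End Consts.

From HB Require Import structures.
From mathcomp Require Import all_boot all_order all_algebra.
From mathcomp Require Import all_classical all_reals all_analysis.
From mathcomp Require Import ring lra.
Set Implicit Arguments. Unset Strict Implicit. Unset Printing Implicit Defensive.
Import Order.TTheory GRing.Theory Num.Theory.
Import numFieldNormedType.Exports.
Local Open Scope classical_set_scope.
Local Open Scope ring_scope.

(* By
   compactness Gamma is uniformly bounded.  Take t in E^i_x and decompose
   Gamma t = sum_j u_j along E^j_{gx}.  Since F^n Gamma = Gamma F^n, the
   forward orbit of Gamma t grows at most like exp (n (chi_i + eps)), while a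
   nonzero u_k with k > i grows at least like exp (n (chi_k - eps)); as
   chi_i - chi_k <= mu < -2 eps the latter is strictly faster, so u_k = 0.
   Pulling back along f^-n excludes k < i in the same way.  Hence
   Gamma E^i_x <= E^i_{gx}, and since Gamma_x : E_x -> E_{gx} is onto and the
   E^i_{gx} form a direct sum, a rank count turns these inclusions into
   equalities. *)

Section FibreNorm.
Variables (R : realType) (N : nat).
Implicit Types (M : 'M[R]_N) (s t : 'rV[R]_N).

Definition bform M s t : R := (s *m M *m t^T) 0 0.

Definition posdef M : Prop := M^T = M /\ forall t, t != 0 -> 0 < bform M t t.

Lemma bformC M s t : M^T = M -> bform M s t = bform M t s.
Proof.
move=> symM; rewrite /bform.
have -> : (t *m M *m s^T) 0 0 = ((t *m M *m s^T)^T) 0 0 by rewrite [in RHS]mxE.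
by rewrite !trmx_mul trmxK symM mulmxA.
Qed.

Lemma bformDl M s1 s2 t : bform M (s1 + s2) t = bform M s1 t + bform M s2 t.
Proof. by rewrite /bform !mulmxDl mxE. Qed.

Lemma bformDr M s t1 t2 : bform M s (t1 + t2) = bform M s t1 + bform M s t2.
Proof. by rewrite /bform linearD /= mulmxDr mxE. Qed.

Lemma bformZl M a s t : bform M (a *: s) t = a * bform M s t.
Proof. by rewrite /bform -!scalemxAl mxE. Qed.

Lemma bformZr M a s t : bform M s (a *: t) = a * bform M s t.
Proof. by rewrite /bform linearZ /= -scalemxAr mxE. Qed.

Lemma bform_mulmx M (C : 'M[R]_N) s t :
  bform M (s *m C) (t *m C) = bform (C *m M *m C^T) s t.
Proof. by rewrite /bform trmx_mul !mulmxA. Qed.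

Lemma bform0r M s : bform M s 0 = 0.
Proof. by rewrite /bform trmx0 mulmx0 mxE. Qed.

Lemma bform_ge0 M t : posdef M -> 0 <= bform M t t.
Proof.
case=> _ posM; have [->|/posM/ltW//] := eqVneq t 0.
by rewrite bform0r.
Qed.

Lemma bform_line M s t r : M^T = M ->
  bform M (s + r *: t) (s + r *: t) =
  bform M s s + 2 * r * bform M s t + r ^+ 2 * bform M t t.
Proof. by move=> symM; rewrite !(bformDl, bformDr, bformZl, bformZr) (bformC t s symM); ring. Qed.

Lemma cauchy_schwarz M s t : posdef M ->
  bform M s t ^+ 2 <= bform M s s * bform M t t.
Proof.
move=> pM; have [->|t_neq0] := eqVneq t 0.
  by rewrite !bform0r expr0n mulr0.
have tt_gt0 : 0 < bform M t t by case: pM => _; exact.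
have := bform_ge0 (s + (- bform M s t / bform M t t) *: t) pM.
rewrite bform_line; last by case: pM.
set b := bform M s t; set c := bform M t t; set a := bform M s s => line_ge0.
have : 0 <= (a + 2 * (- b / c) * b + (- b / c) ^+ 2 * c) * c by rewrite mulr_ge0 // ltW.
have -> : (a + 2 * (- b / c) * b + (- b / c) ^+ 2 * c) * c = a * c - b ^+ 2.
  by field; rewrite gt_eqF.
by rewrite subr_ge0.
Qed.

Lemma fib_normE M t : fib_norm M t = Num.sqrt (bform M t t).
Proof. by []. Qed.

Lemma fib_norm_ge0 M t : 0 <= fib_norm M t.
Proof. exact: sqrtr_ge0. Qed.

Lemma fib_norm0 M : fib_norm M 0 = 0.
Proof. by rewrite /fib_norm mul0mx mul0mx mxE sqrtr0. Qed.

Lemma fib_norm_gt0 M t : posdef M -> t != 0 -> 0 < fib_norm M t.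
Proof. by case=> _ posM /posM; rewrite /fib_norm sqrtr_gt0. Qed.

Lemma fib_normZ M a t : fib_norm M (a *: t) = `|a| * fib_norm M t.
Proof.
rewrite !fib_normE bformZl bformZr mulrA sqrtrM ?sqr_ge0 //.
by rewrite -expr2 sqrtr_sqr.
Qed.

Lemma fib_normN M t : fib_norm M (- t) = fib_norm M t.
Proof. by rewrite -scaleN1r fib_normZ normrN1 mul1r. Qed.

Lemma fib_normD M s t : posdef M ->
  fib_norm M (s + t) <= fib_norm M s + fib_norm M t.
Proof.
move=> pM; have ss_ge0 := bform_ge0 s pM; have tt_ge0 := bform_ge0 t pM.
rewrite !fib_normE.
have st_le : bform M s t <= Num.sqrt (bform M s s) * Num.sqrt (bform M t t).
  rewrite -sqrtrM //; apply: le_trans (ler_norm _) _.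
  by rewrite -sqrtr_sqr ler_sqrt ?mulr_ge0 // cauchy_schwarz.
rewrite -[_ + _ in leRHS]ger0_norm ?addr_ge0 ?sqrtr_ge0 // -sqrtr_sqr.
rewrite ler_sqrt ?sqr_ge0 //.
have := bform_line s t 1 (proj1 pM); rewrite scale1r => ->.
rewrite sqrrD !sqr_sqrtr // -mulr_natl; lra.
Qed.

Lemma fib_normB M s t : posdef M ->
  fib_norm M (s - t) <= fib_norm M s + fib_norm M t.
Proof. by move=> pM; rewrite -(fib_normN M t); exact: fib_normD. Qed.

Lemma fib_norm_sum M (I : finType) (P : pred I) (v : I -> 'rV[R]_N) : posdef M ->
  fib_norm M (\sum_(j | P j) v j) <= \sum_(j | P j) fib_norm M (v j).
Proof.
move=> pM; elim/big_rec2: _ => [|j a b _ IH]; first by rewrite fib_norm0.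
by apply: le_trans (fib_normD _ _ pM) _; rewrite lerD2l.
Qed.
End FibreNorm.

Section DirectSums.
Variables (F : fieldType) (I : finType) (n : nat).
Implicit Types (V : I -> 'M[F]_n) (u v : I -> 'rV[F]_n).

Lemma dsum_decomp V (t : 'rV[F]_n) : (t <= \sum_i V i)%MS ->
  exists2 u, (forall j, (u j <= V j)%MS) & t = \sum_j u j.
Proof.
move=> /sub_sumsmxP [w ->].
by exists (fun j => w j *m V j) => // j; exact: submxMl.
Qed.

Lemma dsum_decomp_uniq V u v : mxdirect (\sum_i V i) ->
  (forall j, (u j <= V j)%MS) -> (forall j, (v j <= V j)%MS) ->
  \sum_j u j = \sum_j v j -> u =1 v.
Proof.
move=> dV uV vV euv.
have [|w _ _ w_uniq] := @sub_dsumsmx F I predT 1 n (\sum_j u j) V dV.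
  by apply: summx_sub_sums => j _; exact: uV.
by move=> j; rewrite (w_uniq u) // (w_uniq v).
Qed.

(* If M maps S = sum V_i onto T = (+) W_i with V_i M <= W_i, then V_i M = W_i:
   the ranks of the V_i M add up to at least rank T = sum rank W_i. *)
Lemma mxdirect_image_eq (V W : I -> 'M[F]_n) (S T M : 'M[F]_n) :
  (\sum_i V i == S)%MS -> (\sum_i W i == T)%MS -> mxdirect (\sum_i W i) ->
  (S *m M == T)%MS -> (forall i, (V i *m M <= W i)%MS) ->
  forall i, (V i *m M == W i)%MS.
Proof.
move=> defS defT dW defSM sVW i.
have rk_sum : (\sum_j \rank (V j *m M) <= \sum_j \rank (W j) ?= iff
                 [forall j, (V j *m M == W j)%MS])%N.
  by apply: leqif_sum => j _; exact: mxrank_leqif_eq (sVW j).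
have rkT : \rank T = (\sum_j \rank (W j))%N.
  by rewrite -(eqmx_rank defT); apply/eqP; exact: dW.
have rkT_le : (\rank T <= \sum_j \rank (V j *m M))%N.
  rewrite -(eqmx_rank defSM) -(eqmxMr M (eqmxP defS)) sumsmxMr.
  exact: (mxrank_sum_leqif _).1.
suff /forallP/(_ i) : [forall j, (V j *m M == W j)%MS] by [].
by rewrite -rk_sum.2 eqn_leq rk_sum.1 -rkT rkT_le.
Qed.
End DirectSums.

Section ExponentialRates.
Variable R : realType.

Lemma const_not_exp_decay (a C gap : R) : 0 < a -> 0 < gap ->
  ~ (forall n : nat, a <= C * expR (- (n%:R * gap))).
Proof.
move=> a_gt0 gap_gt0 bound.
have [C_le0|C_gt0] := lerP C 0.
  by have := bound 0%N; rewrite mul0r oppr0 expR0 mulr1 leNgt (le_lt_trans C_le0 a_gt0).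
pose n := (Num.truncn (C / (a * gap))).+1.
have n_big : C < a * (n%:R * gap).
  rewrite mulrCA -ltr_pdivrMr ?mulr_gt0 //; exact: truncnS_gt.
have exp_big : n%:R * gap < expR (n%:R * gap).
  by apply: lt_le_trans (expR_ge1Dx _); rewrite ltrDr.
have := bound n; rewrite expRN ler_pdivlMr ?expR_gt0 // leNgt.
by rewrite (lt_trans n_big) // ltr_pM2l.
Qed.

Lemma dominant_rate (I : finType) (k : I) (T rate : I -> R) (a b C gap : R) :
  0 < gap -> 0 < T k -> (forall j, 0 <= T j) -> b <= a - gap ->
  (forall j, j != k -> T j = 0 \/ rate j <= a - gap) ->
  ~ (forall n : nat, expR (n%:R * a) * T k <=
       C * expR (n%:R * b) + \sum_(j | j != k) expR (n%:R * rate j) * T j).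
Proof.
move=> gap_gt0 Tk_gt0 T_ge0 b_le rate_le bound.
apply: (@const_not_exp_decay (T k) (`|C| + \sum_(j | j != k) T j) gap) => // n.
set D := expR (n%:R * a) * expR (- (n%:R * gap)).
have slower c : c <= a - gap -> expR (n%:R * c) <= D.
  by move=> c_le; rewrite /D -expRD ler_expR -mulrN -mulrDr ler_wpM2l.
have C_le : C * expR (n%:R * b) <= `|C| * D.
  apply: le_trans (ler_norm _) _; rewrite normrM (gtr0_norm (expR_gt0 _)).
  by rewrite ler_wpM2l // slower.
have sum_le : \sum_(j | j != k) expR (n%:R * rate j) * T j <=
              \sum_(j | j != k) D * T j.
  apply: ler_sum => j /rate_le [->|rate_j]; first by rewrite !mulr0.
  by rewrite ler_wpM2r // slower.
have := le_trans (bound n) (lerD C_le sum_le).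
rewrite -mulr_sumr [`|C| * D]mulrC -mulrDr /D -mulrA ler_pM2l ?expR_gt0 //.
by rewrite mulrC.
Qed.

Lemma le_expR_divl (c x y : R) : expR c * x <= y -> x <= expR (- c) * y.
Proof. by rewrite expRN ler_pdivlMl ?expR_gt0. Qed.

Lemma le_expR_divr (c x y : R) : y <= expR c * x -> expR (- c) * y <= x.
Proof. by rewrite expRN ler_pdivrMl ?expR_gt0. Qed.

End ExponentialRates.

Section SpectralGap.
Variables (R : realType) (l : nat) (chi : 'I_l.+1 -> R).
Hypothesis chi_incr : forall i j : 'I_l.+1, (i < j)%N -> chi i < chi j.

(* chi_a - chi_b is one of the negative numbers chi_i - sum_j s_j chi_j. *)
Lemma chi_gap_le_mu (a b : 'I_l.+1) : (a < b)%N -> chi a - chi b <= mu_const chi.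
Proof.
move=> ab; apply: ub_le_sup.
  by exists 0 => r [i [s [_ /ltW]]].
exists a, (fun j => nat_of_bool (j == b)); split; last by rewrite subr_lt0 chi_incr.
congr (_ - _); rewrite /combo (bigD1 b) //= eqxx mul1r big1 ?addr0 //.
by move=> j /negPf ->; rewrite mul0r.
Qed.

(* eps < eps0 <= -mu / (d + 1) with d >= 1 gives 2 eps < -mu. *)
Lemma mu_add_2eps_lt0 (eps : R) : chi ord_max < 0 -> 0 <= eps -> eps < eps0 chi ->
  mu_const chi + 2 * eps < 0.
Proof.
move=> chil_lt0 eps_ge0; rewrite /eps0 !lt_min => /and3P[_ _].
have chi1_le : chi1 chi <= chil chi.
  have [l0|l_gt0] := posnP l.
    by rewrite /chi1 /chil (_ : ord0 = ord_max) //; apply/val_inj; rewrite /= l0.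
  exact/ltW/chi_incr.
have d_ge1 : 1 <= dconst chi.
  have one_int : (1 : int)%:~R = 1 :> R by [].
  by rewrite /dconst -one_int ler_int floor_ge_int one_int ler_ndivlMr // mul1r.
by rewrite ltr_pdivlMr; [nra|lra].
Qed.
End SpectralGap.

Section Compactness.
Variable R : realType.

Lemma entry_continuous m n (i : 'I_m) (j : 'I_n) :
  continuous (fun M : 'M[R]_(m, n) => M i j).
Proof.
move=> M U /nbhs_ballP[e /= e_gt0 eU].
by apply/nbhs_ballP; exists e => //= M' [_ MM']; apply: eU; exact: MM'.
Qed.

Lemma continuous_compose (S T U : topologicalType) (f : S -> T) (g : T -> U) :
  continuous f -> continuous g -> continuous (g \o f).
Proof. by move=> f_cont g_cont x; exact: continuous_comp (f_cont x) (g_cont (f x)). Qed.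

Lemma continuous_sum (T : topologicalType) (I : Type) (r : seq I) (F : I -> T -> R) :
  (forall i, continuous (F i)) -> continuous (fun p => \sum_(i <- r) F i p).
Proof.
move=> F_cont; rewrite -fct_sumE.
apply: (big_ind (fun h : T -> R => continuous h)) => // [p|h1 h2 c1 c2 p].
  exact: cst_continuous.
exact: (continuousD (c1 p) (c2 p)).
Qed.

Definition entrywise_continuous (T : topologicalType) m n (a : T -> 'M[R]_(m, n)) :=
  forall i j, continuous (fun p => a p i j).

Lemma continuous_entrywise (T : topologicalType) m n (a : T -> 'M[R]_(m, n)) :
  continuous a -> entrywise_continuous a.
Proof. by move=> a_cont i j; exact: continuous_compose a_cont (@entry_continuous _ _ i j). Qed.

Lemma entrywise_continuous_tr (T : topologicalType) m n (a : T -> 'M[R]_(m, n)) :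
  entrywise_continuous a -> entrywise_continuous (fun p => (a p)^T).
Proof. by move=> a_cont i j; under eq_fun do rewrite mxE; exact: a_cont. Qed.

Lemma entrywise_continuous_mul (T : topologicalType) m n k
    (a : T -> 'M[R]_(m, n)) (b : T -> 'M[R]_(n, k)) :
  entrywise_continuous a -> entrywise_continuous b ->
  entrywise_continuous (fun p => a p *m b p).
Proof.
move=> a_cont b_cont i j; under eq_fun do rewrite mxE.
by apply: continuous_sum => l p; apply: continuousM; [exact: a_cont|exact: b_cont].
Qed.

Lemma quadratic_form_continuous (X : topologicalType) N (S : X -> 'M[R]_N) :
  entrywise_continuous S ->
  continuous (fun p : X * 'rV[R]_N => bform (S p.1) p.2 p.2).
Proof.
move=> S_cont.
have fst_cont : continuous (fun p : X * 'rV[R]_N => p.1) by move=> p; exact: cvg_fst.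
have snd_cont : continuous (fun p : X * 'rV[R]_N => p.2) by move=> p; exact: cvg_snd.
have snd_entries := continuous_entrywise snd_cont.
apply: entrywise_continuous_mul; last exact: entrywise_continuous_tr.
apply: entrywise_continuous_mul => // i j.
exact: continuous_compose fst_cont (S_cont i j).
Qed.

Lemma unit_sphere_compact N : compact [set t : 'rV[R]_N | `|t| = 1].
Proof.
apply: bounded_closed_compact; first by exists 1; split => // r r1 t /= ->; exact: ltW.
rewrite (_ : [set t | _] = (fun t : 'rV[R]_N => `|t|) @^-1` [set 1]) //.
by apply: preimage_closed; [move=> t _; exact: norm_continuous|exact: closed_eq].
Qed.

(* On a compact base, a continuous family of quadratic forms is dominated by a
   continuous family of positive definite ones: the ratio of the two forms is
   bounded on the compact set X x (unit sphere), and is homogeneous of degree 0. *)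
Lemma quadratic_form_bound (X : topologicalType) N (M Q : X -> 'M[R]_N) :
  compact [set: X] -> entrywise_continuous M -> entrywise_continuous Q ->
  (forall x, posdef (Q x)) ->
  exists c, forall x t, bform (M x) t t <= c * bform (Q x) t t.
Proof.
move=> X_cpt M_cont Q_cont Q_pos.
(* The denominator is positive everywhere and equals qf Q on the unit sphere. *)
pose qf (S : X -> 'M[R]_N) (p : X * 'rV[R]_N) := bform (S p.1) p.2 p.2.
pose den p := qf Q p + `|1 - `|p.2| |.
have den_gt0 p : 0 < den p.
  case: p => x t; rewrite /den /qf /=; have [->|t_neq0] := eqVneq t 0.
    by rewrite bform0r normr0 subr0 normr1 add0r.
  by apply: ltr_pwDl; [case: (Q_pos x) => _; exact|exact: normr_ge0].
pose h p := qf M p / den p.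
have h_cont : continuous h.
  move=> p; apply: continuousM; first exact: quadratic_form_continuous.
  apply: continuousV; first by rewrite gt_eqF.
  apply: continuousD; first exact: quadratic_form_continuous.
  have norm_snd_cont : continuous (fun q : X * 'rV[R]_N => `|q.2|).
    by apply: continuous_compose norm_continuous => q; exact: cvg_snd.
  have dist_cont : continuous (fun q : X * 'rV[R]_N => 1 - `|q.2|).
    move=> q; have one_cont : {for q, continuous (fun=> (1 : R))} by exact: cst_continuous.
    exact: (continuousD one_cont (continuousN (norm_snd_cont q))).
  exact: (continuous_compose dist_cont norm_continuous).
have [c [_ c_bound]] := compact_bounded (continuous_compact
  (continuous_subspaceT h_cont) (compact_setX X_cpt (@unit_sphere_compact N))).
exists (c + 1) => x t; have [->|t_neq0] := eqVneq t 0.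
  by rewrite !bform0r mulr0.
have Qt_gt0 : 0 < bform (Q x) t t by case: (Q_pos x) => _; exact.
set r := `|t|^-1; have r_gt0 : 0 < r by rewrite invr_gt0 normr_gt0.
have rt_unit : `|r *: t| = 1 by rewrite normrZ gtr0_norm // mulVf // normr_eq0.
have : h (x, r *: t) <= c + 1.
  apply: le_trans (ler_norm _) (c_bound (c + 1) _ _ _); first by rewrite ltrDl.
  by exists (x, r *: t).
rewrite /h /den /qf /= rt_unit subrr normr0 addr0 !(bformZl, bformZr) !mulrA.
set a := bform (M x) t t; set b := bform (Q x) t t.
have -> : r * r * a / (r * r * b) = a / b by field; rewrite !gt_eqF.
by rewrite ler_pdivrMr.
Qed.

Lemma extension_bounded (X : topologicalType) N (g : X -> X) (B G : X -> 'M[R]_N) :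
  compact [set: X] -> continuous g -> continuous B -> continuous G ->
  (forall x, posdef (G x)) ->
  exists2 K, 0 <= K &
    forall x t, fib_norm (G (g x)) (t *m B x) <= K * fib_norm (G x) t.
Proof.
move=> X_cpt g_cont B_cont G_cont G_pos.
have BGB_cont : entrywise_continuous (fun x => B x *m G (g x) *m (B x)^T).
  apply: entrywise_continuous_mul; last exact/entrywise_continuous_tr/continuous_entrywise.
  apply: entrywise_continuous_mul; first exact: continuous_entrywise.
  exact/continuous_entrywise/continuous_compose.
have [c c_bound] := quadratic_form_bound X_cpt BGB_cont (continuous_entrywise G_cont) G_pos.
exists (Num.sqrt `|c|) => [|x t]; first exact: sqrtr_ge0.
rewrite /fib_norm -sqrtrM ?normr_ge0 // ler_sqrt ?mulr_ge0 ?normr_ge0 ?(bform_ge0 t) //.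
rewrite -/(bform (G (g x)) _ _) -/(bform (G x) t t) bform_mulmx.
by apply: le_trans (c_bound x t) _; rewrite ler_wpM2r ?ler_norm ?bform_ge0.
Qed.
End Compactness.

Section CommutingExtension.
Variables (R : realType) (X : Type) (N l : nat) (f finv g : X -> X).
Variables (P A B G : X -> 'M[R]_N) (Pi : 'I_l.+1 -> X -> 'M[R]_N).
Variables (chi : 'I_l.+1 -> R) (eps mu K : R).
Hypotheses (fK : cancel f finv) (finvK : cancel finv f)
  (fg_comm : forall x, g (f x) = f (g x))
  (A_P : forall x, (P x *m A x == P (f x))%MS)
  (B_P : forall x, (P x *m B x == P (g x))%MS)
  (Pi_sum : forall x, (\sum_i Pi i x == P x)%MS)
  (Pi_direct : forall x, mxdirect (\sum_i Pi i x))
  (A_Pi : forall i x, (Pi i x *m A x == Pi i (f x))%MS)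
  (G_pos : forall x, posdef (G x))
  (A_growth : forall i x (t : 'rV[R]_N), (t <= Pi i x)%MS ->
      expR (chi i - eps) * fib_norm (G x) t <= fib_norm (G (f x)) (t *m A x) /\
      fib_norm (G (f x)) (t *m A x) <= expR (chi i + eps) * fib_norm (G x) t)
  (AB_comm : forall x, P x *m A x *m B (f x) = P x *m B x *m A (g x))
  (K_ge0 : 0 <= K)
  (B_bound : forall x t, fib_norm (G (g x)) (t *m B x) <= K * fib_norm (G x) t)
  (chi_gap : forall a b : 'I_l.+1, (a < b)%N -> chi a - chi b <= mu)
  (gap_pos : mu + 2 * eps < 0).

Fixpoint Fn (x : X) (n : nat) : 'M[R]_N :=
  if n is n'.+1 then A x *m Fn (f x) n' else 1%:M.

Lemma Fn_Pi n x i : (Pi i x *m Fn x n :=: Pi i (iter n f x))%MS.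
Proof.
elim: n x => [|n IH] x /=; first by rewrite mulmx1.
rewrite mulmxA -iterS iterSr.
exact: eqmx_trans (eqmxMr _ (eqmxP (A_Pi i x))) (IH _).
Qed.

Lemma iter_f_g n x : iter n f (g x) = g (iter n f x).
Proof. by elim: n => //= n ->; rewrite fg_comm. Qed.

Lemma iter_finv_g n x : iter n finv (g x) = g (iter n finv x).
Proof.
have finv_g z : finv (g z) = g (finv z) by rewrite -{1}(finvK z) fg_comm fK.
by elim: n => //= n ->; rewrite finv_g.
Qed.

Lemma iter_f_finv n x : iter n f (iter n finv x) = x.
Proof. by elim: n => // n IH; rewrite iterSr iterS finvK. Qed.

Lemma Fn_B_comm n x (t : 'rV[R]_N) : (t <= P x)%MS ->
  t *m Fn x n *m B (iter n f x) = t *m B x *m Fn (g x) n.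
Proof.
elim: n x t => [|n IH] x t tP /=; first by rewrite !mulmx1.
have tA_P : (t *m A x <= P (f x))%MS by rewrite -(eqmxP (A_P x)) submxMr.
rewrite mulmxA -iterS iterSr IH //.
case/submxP: tP => w ->.
by rewrite -!(mulmxA w) AB_comm !mulmxA fg_comm.
Qed.

Lemma Fn_growth n x j (t : 'rV[R]_N) : (t <= Pi j x)%MS ->
  expR (n%:R * (chi j - eps)) * fib_norm (G x) t
    <= fib_norm (G (iter n f x)) (t *m Fn x n) /\
  fib_norm (G (iter n f x)) (t *m Fn x n)
    <= expR (n%:R * (chi j + eps)) * fib_norm (G x) t.
Proof.
elim: n x t => [|n IH] x t tPi.
  by rewrite /= !mul0r !expR0 !mul1r mulmx1.
have tA_Pi : (t *m A x <= Pi j (f x))%MS by rewrite -(eqmxP (A_Pi j x)) submxMr.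
have [lo hi] := A_growth tPi; have [lo' hi'] := IH _ _ tA_Pi.
have expS c : expR (n.+1%:R * c) = expR (n%:R * c) * expR c.
  by rewrite -addn1 natrD mulrDl mul1r expRD.
rewrite iterSr /= mulmxA !expS -!mulrA; split.
  by apply: le_trans lo'; rewrite ler_wpM2l ?expR_ge0.
by apply: le_trans hi' _; rewrite ler_wpM2l ?expR_ge0.
Qed.

Lemma Pi_sub_P j x : (Pi j x <= P x)%MS.
Proof. by rewrite -(eqmxP (Pi_sum x)) (sumsmx_sup j). Qed.

Lemma decompose x (t : 'rV[R]_N) : (t <= P x)%MS ->
  exists2 u : 'I_l.+1 -> 'rV[R]_N, (forall j, (u j <= Pi j x)%MS) & t = \sum_j u j.
Proof. by rewrite -(eqmxP (Pi_sum x)); exact: dsum_decomp. Qed.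

Lemma components_uniq x (u v : 'I_l.+1 -> 'rV[R]_N) :
  (forall j, (u j <= Pi j x)%MS) -> (forall j, (v j <= Pi j x)%MS) ->
  \sum_j u j = \sum_j v j -> u =1 v.
Proof. exact: dsum_decomp_uniq. Qed.

Lemma forward_components_vanish z i C (t : 'rV[R]_N) (u : 'I_l.+1 -> 'rV[R]_N) :
  (forall j, (u j <= Pi j z)%MS) -> t = \sum_j u j ->
  (forall n : nat, fib_norm (G (iter n f z)) (t *m Fn z n)
                     <= C * expR (n%:R * (chi i + eps))) ->
  forall j : 'I_l.+1, (i < j)%N -> u j = 0.
Proof.
move=> uPi t_sum bound j0 ij0; apply/eqP/negPn/negP => uj0.
pose faster (k : 'I_l.+1) := (i < k)%N && (u k != 0).
have [k /andP[ik uk] kmax] := arg_maxnP (fun k : 'I_l.+1 => nat_of_ord k)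
  (introT andP (conj ij0 uj0) : faster j0).
have u_above (j : 'I_l.+1) : (k < j)%N -> u j = 0.
  move=> kj; apply/eqP/negPn/negP => uj.
  by have /kmax := introT andP (conj (ltn_trans ik kj) uj) => /=; rewrite leqNgt kj.
apply: (@dominant_rate _ _ k (fun j => fib_norm (G z) (u j)) (fun j => chi j + eps)
   (chi k - eps) (chi i + eps) C (- (mu + 2 * eps))).
- by rewrite oppr_gt0.
- exact: fib_norm_gt0.
- by move=> j; exact: fib_norm_ge0.
- by have := chi_gap ik; lra.
- move=> j jk; case: (ltngtP k j) => [kj|jk'|/val_inj kj]; last by rewrite kj eqxx in jk.
  + by left; rewrite u_above // fib_norm0.
  + by right; have := chi_gap jk'; lra.
move=> n /=.
have uk_eq : u k *m Fn z n = t *m Fn z n - \sum_(j | j != k) u j *m Fn z n.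
  by rewrite t_sum mulmx_suml (bigD1 k) //= addrK.
apply: le_trans (Fn_growth n (uPi k)).1 _.
rewrite uk_eq; apply: le_trans (fib_normB _ _ (G_pos _)) _.
apply: lerD; first exact: bound.
apply: le_trans (fib_norm_sum _ _ (G_pos _)) _.
by apply: ler_sum => j _; exact: (Fn_growth n (uPi j)).2.
Qed.

Lemma backward_components_vanish z i C (t : 'rV[R]_N) (u : 'I_l.+1 -> 'rV[R]_N) :
  (forall j, (u j <= Pi j z)%MS) -> t = \sum_j u j ->
  (forall n : nat, exists2 s : 'rV[R]_N, (s <= P (iter n finv z))%MS &
      s *m Fn (iter n finv z) n = t /\
      fib_norm (G (iter n finv z)) s <= C * expR (n%:R * (eps - chi i))) ->
  forall j : 'I_l.+1, (j < i)%N -> u j = 0.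
Proof.
move=> uPi t_sum preimage j0 j0i; apply/eqP/negPn/negP => uj0.
pose slower (k : 'I_l.+1) := (k < i)%N && (u k != 0).
have [k /andP[ki uk] kmin] := arg_minnP (fun k : 'I_l.+1 => nat_of_ord k)
  (introT andP (conj j0i uj0) : slower j0).
have u_below (j : 'I_l.+1) : (j < k)%N -> u j = 0.
  move=> jk; apply/eqP/negPn/negP => uj.
  by have /kmin := introT andP (conj (ltn_trans jk ki) uj) => /=; rewrite leqNgt jk.
apply: (@dominant_rate _ _ k (fun j => fib_norm (G z) (u j)) (fun j => eps - chi j)
   (- (chi k + eps)) (eps - chi i) C (- (mu + 2 * eps))).
- by rewrite oppr_gt0.
- exact: fib_norm_gt0.
- by move=> j; exact: fib_norm_ge0.
- by have := chi_gap ki; lra.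
- move=> j jk; case: (ltngtP k j) => [kj|jk'|/val_inj kj]; last by rewrite kj eqxx in jk.
  + by right; have := chi_gap kj; lra.
  + by left; rewrite u_below // fib_norm0.
move=> n; have [s sP [sF s_le]] := preimage n.
set y := iter n finv z in sP sF s_le.
have yz : iter n f y = z by exact: iter_f_finv.
have [v vPi s_sum] := decompose sP.
have vF_Pi j : (v j *m Fn y n <= Pi j z)%MS.
  by rewrite -yz -(Fn_Pi n y j) submxMr.
have vF_u : forall j, v j *m Fn y n = u j.
  by apply: components_uniq => //; rewrite -mulmx_suml -s_sum sF.
have vk_eq : v k = s - \sum_(j | j != k) v j by rewrite s_sum (bigD1 k) //= addrK.
apply: le_trans (_ : fib_norm (G y) (v k) <= _).
  rewrite mulrN; apply: le_expR_divr.
  by have := (Fn_growth n (vPi k)).2; rewrite yz vF_u.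
rewrite vk_eq; apply: le_trans (fib_normB _ _ (G_pos _)) _.
apply: lerD; first exact: s_le.
apply: le_trans (fib_norm_sum _ _ (G_pos _)) _.
apply: ler_sum => j _; rewrite -opprB mulrN; apply: le_expR_divl.
by have := (Fn_growth n (vPi j)).1; rewrite yz vF_u.
Qed.

(* For t in E^i_x, the vector Gamma t has no component outside E^i_{gx}: its
   forward orbit grows at most like chi_i + eps (as F^n Gamma = Gamma F^n and
   Gamma is bounded), and its F^n-preimages shrink at least like chi_i - eps. *)
Lemma Gamma_components_vanish x i (t : 'rV[R]_N) (u : 'I_l.+1 -> 'rV[R]_N) :
  (t <= Pi i x)%MS -> (forall j, (u j <= Pi j (g x))%MS) ->
  t *m B x = \sum_j u j -> forall j, j != i -> u j = 0.
Proof.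
move=> tPi uPi tB_sum j ji.
have tP := submx_trans tPi (Pi_sub_P i x).
case: (ltngtP i j) => [ij|jI|/val_inj ij]; last by rewrite ij eqxx in ji.
- apply: (forward_components_vanish (C := K * fib_norm (G x) t) uPi tB_sum _ ij).
  move=> n; rewrite iter_f_g -Fn_B_comm //.
  apply: le_trans (B_bound _ _) _; rewrite -mulrA ler_wpM2l // mulrC.
  exact: (Fn_growth n tPi).2.
- apply: (backward_components_vanish (C := K * fib_norm (G x) t) uPi tB_sum _ jI).
  move=> n; set y := iter n finv x.
  have yx : iter n f y = x by exact: iter_f_finv.
  have /submxP[w t_eq] : (t <= Pi i y *m Fn y n)%MS by rewrite (Fn_Pi n y i) yx.
  have pre_Pi : (w *m Pi i y <= Pi i y)%MS by exact: submxMl.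
  have pre_F : w *m Pi i y *m Fn y n = t by rewrite t_eq mulmxA.
  have pre_P := submx_trans pre_Pi (Pi_sub_P i y).
  exists (w *m Pi i y *m B y); rewrite iter_finv_g.
    by rewrite -(eqmxP (B_P y)) submxMr.
  split; first by rewrite -Fn_B_comm // yx pre_F.
  apply: le_trans (B_bound _ _) _; rewrite -mulrA ler_wpM2l // mulrC.
  rewrite -opprB mulrN; apply: le_expR_divl.
  by have := (Fn_growth n pre_Pi).1; rewrite yx pre_F.
Qed.

Lemma Gamma_Pi_sub x i : (Pi i x *m B x <= Pi i (g x))%MS.
Proof.
apply/row_subP => r; rewrite row_mul.
have tPi : (row r (Pi i x) <= Pi i x)%MS by exact: row_sub.
have tB_P : (row r (Pi i x) *m B x <= P (g x))%MS.
  by rewrite -(eqmxP (B_P x)) submxMr // (submx_trans tPi (Pi_sub_P i x)).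
have [u uPi tB_sum] := decompose tB_P.
have u_vanish := Gamma_components_vanish tPi uPi tB_sum.
by rewrite tB_sum (bigD1 i) //= big1 ?addr0 // => j /u_vanish.
Qed.
End CommutingExtension.

Theorem mainTheorem9
  (R : realType) (X : metricType R) (N l : nat)
  (f g : X -> X)
  (P : X -> 'M[R]_N)                  (* the bundle E *)
  (A : X -> 'M[R]_N)                  (* F, linear extension of f *)
  (Pi : 'I_l.+1 -> X -> 'M[R]_N)      (* the splitting E = E^1 + ... + E^l *)
  (G : X -> 'M[R]_N)                  (* the (suitable) continuous metric *)
  (chi : 'I_l.+1 -> R) (eps : R)
  (B : X -> 'M[R]_N)                  (* Gamma, linear extension of g *)
  (* X compact metric space, f homeomorphism *)
  (hX : compact [set: X])
  (hf : homeomorphism f)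
  (* E continuous bundle with continuous inner products, F linear ext. *)
  (hP : cont_subbundle P)
  (hG : cont_inner G)
  (hA : lin_extension P f A)
  (* chi and eps *)
  (hchi : forall i j : 'I_l.+1, (i < j)%N -> chi i < chi j)
  (hchineg : chi ord_max < 0)
  (heps : 0 < eps) (heps0 : eps < eps0 chi)
  (* continuous F-invariant splitting with the growth bounds *)
  (hPi : forall i, cont_subbundle (Pi i))
  (hsum : forall x, (\sum_i Pi i x == P x)%MS)
  (hdirect : forall x, mxdirect (\sum_i Pi i x))
  (hinv : forall i x, (Pi i x *m A x == Pi i (f x))%MS)
  (hgrowth : forall i x (t : 'rV[R]_N), (t <= Pi i x)%MS ->
      expR (chi i - eps) * fib_norm (G x) t <= fib_norm (G (f x)) (t *m A x) /\
      fib_norm (G (f x)) (t *m A x) <= expR (chi i + eps) * fib_norm (G x) t)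
  (* g homeomorphism commuting with f; Gamma commuting with F *)
  (hg : homeomorphism g)
  (hfg : forall x, g (f x) = f (g x))
  (hB : lin_extension P g B)
  (hcomm : forall x, P x *m A x *m B (f x) = P x *m B x *m A (g x)) :
  forall (x : X) (i : 'I_l.+1), (Pi i x *m B x == Pi i (g x))%MS.
Proof.
move=> x i.
have [finv [_ _ fK finvK]] := hf.
have [ginv [g_cont _ _ _]] := hg.
have G_pos y : posdef (G y) := proj2 hG y.
have [K K_ge0 B_bound] := extension_bounded hX g_cont (proj1 hB) (proj1 hG) G_pos.
have gap := chi_gap_le_mu hchi.
have gap_pos := mu_add_2eps_lt0 hchi hchineg (ltW heps) heps0.
have Pi_B_sub j : (Pi j x *m B x <= Pi j (g x))%MS.
  exact: (Gamma_Pi_sub fK finvK hfg (fun y => (proj2 hA y).1) (fun y => (proj2 hB y).1)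
    hsum hdirect hinv G_pos hgrowth hcomm K_ge0 B_bound gap gap_pos).
exact: (mxdirect_image_eq (hsum x) (hsum (g x)) (hdirect (g x)) (proj2 hB x).1 Pi_B_sub).
Qed.
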